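(* Let $\beta>0$, let $\mathcal{A}$ be a finite vocabulary, let $\pi_{\mathrm{ref}}$ be a reference policy, and consider the token-level MDP with deterministic transitions and reward function $r(\mathbf{s},\mathbf{a})$ described in the context, with optimal KL-regularized policy $\pi^*$ and optimal soft state-value function $V^*$. Let $x$ be a prompt and let $y_w=(\mathbf{a}^w_0,\mathbf{a}^w_1,\dots)$ and $y_l=(\mathbf{a}^l_0,\mathbf{a}^l_1,\dots)$ be two responses to $x$, with states $\mathbf{s}^v_0=x$ and $\mathbf{s}^v_{t+1}=\mathbf{s}^v_t\oplus \mathbf{a}^v_t$ for $v\in\{w,l\}$. For an integer $k\ge 0$ not exceeding the lengths of both responses, define the equal-length sub-trajectory Bradley–Terry model $$p^*_k(y_{w,\le k}\succeq y_{l,\le k})=\frac{E_w}{E_w+E_l},\qquad E_v=\exp\Big(\sum_{t=0}^{k} r(\mathbf{s}^v_t,\mathbf{a}^v_t)+V^*(\mathbf{s}^v_{k+1})\Big).$$ Then the policy derived from the optimal equal-length sub-trajectory BT model is equivalent to the optimal policy derived from the original sequence-level BT model for DPO; that is, for every such $k$, $$p^*_k(y_{w,\le k}\succeq y_{l,\le k})=\sigma\big(R_w(k)-R_l(k)\big),\qquad R_v(k)=\sum_{t=0}^{k}\beta\log\frac{\pi^*(\mathbf{a}^v_t\mid \mathbf{s}^v_t)}{\pi_{\mathrm{ref}}(\mathbf{a}^v_t\mid \mathbf{s}^v_t)},$$ so the equal-length model is parameterized by the same optimal policy $\pi^*$ in the same DPO form as the sequence-level model.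
   Context: Token-level MDP: a state $\mathbf{s}_t=(x_0,\dots,x_m,y_0,\dots,y_{t-1})$ consists of the prompt tokens together with all response tokens generated so far; an action $\mathbf{a}_t\in\mathcal{A}$ selects the next token, and the transition is deterministic: $\mathbf{s}_{t+1}=\mathbf{s}_t\oplus\mathbf{a}_t$ (concatenation). A response ends at a terminal (end-of-sequence) state, at which $V^*=0$. The RL objective is the KL-regularized one: maximize $\mathbb{E}\big[\sum_t r(\mathbf{s}_t,\mathbf{a}_t)\big]-\beta\,\mathbb{D}_{\mathrm{KL}}[\pi(\cdot\mid x)\,\|\,\pi_{\mathrm{ref}}(\cdot\mid x)]$ over policies $\pi$. Its optimal soft value functions satisfy $Q^*(\mathbf{s}_t,\mathbf{a}_t)=r(\mathbf{s}_t,\mathbf{a}_t)+V^*(\mathbf{s}_{t+1})$, $V^*(\mathbf{s})=\beta\log\sum_{\mathbf{a}\in\mathcal{A}}\pi_{\mathrm{ref}}(\mathbf{a}\mid\mathbf{s})\exp(Q^*(\mathbf{s},\mathbf{a})/\beta)$, and the optimal policy is $\pi^*(\mathbf{a}\mid\mathbf{s})=\pi_{\mathrm{ref}}(\mathbf{a}\mid\mathbf{s})\exp\big((Q^*(\mathbf{s},\mathbf{a})-V^*(\mathbf{s}))/\beta\big)$. The original sequence-level Bradley–Terry model is $p^*(y_w\succeq y_l)=A_w/(A_w+A_l)$ with $A_w=\exp(\sum_{i} r(\mathbf{s}^w_i,\mathbf{a}^w_i))$, $A_l=\exp(\sum_{i} r(\mathbf{s}^l_i,\mathbf{a}^l_i))$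 summed over the full responses; DPO expresses this model through the optimal policy as $\sigma$ of the difference of the full-sequence sums $\sum_i\beta\log\frac{\pi^*(\mathbf{a}_i\mid\mathbf{s}_i)}{\pi_{\mathrm{ref}}(\mathbf{a}_i\mid\mathbf{s}_i)}$ for $y_w$ and $y_l$, and fits the policy by maximum likelihood of preference data under this parameterization. $\sigma(z)=1/(1+e^{-z})$ is the sigmoid function; $y_{v,\le k}$ denotes the prefix $(\mathbf{a}^v_0,\dots,\mathbf{a}^v_k)$. *)

From HB Require Import structures.
From mathcomp Require Import all_boot all_order all_algebra.
From mathcomp Require Import all_classical all_reals all_analysis.
Set Implicit Arguments. Unset Strict Implicit. Unset Printing Implicit Defensive.
Import Order.TTheory GRing.Theory Num.Theory.
Local Open Scope ring_scope.

Section TokenMDP.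
Variables (R : realType) (A : finType).

Definition sigmoid (z : R) : R := (1 + expR (- z))^-1.

Fixpoint traj_sum (f : seq A -> A -> R) (s : seq A) (ys : seq A) : R :=
  match ys with
  | [::] => 0
  | a :: ys' => f s a + traj_sum f (rcons s a) ys'
  end.

Definition pistar (beta : R) (pi_ref : seq A -> A -> R)
  (Q : seq A -> A -> R) (V : seq A -> R) (s : seq A) (a : A) : R :=
  pi_ref s a * expR ((Q s a - V s) / beta).

Definition Esub (r : seq A -> A -> R) (V : seq A -> R) (x y : seq A) (k : nat) : R :=
  expR (traj_sum r x (take k.+1 y) + V (x ++ take k.+1 y)).

Definition pk_BT (r : seq A -> A -> R) (V : seq A -> R) (x yw yl : seq A) (k : nat) : R :=
  Esub r V x yw k / (Esub r V x yw k + Esub r V x yl k).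

Definition implicit_reward (beta : R) (pi_ref : seq A -> A -> R)
  (Q : seq A -> A -> R) (V : seq A -> R) (x y : seq A) (k : nat) : R :=
  traj_sum (fun s a => beta * ln (pistar beta pi_ref Q V s a / pi_ref s a)) x (take k.+1 y).

End TokenMDP.

From HB Require Import structures.
From mathcomp Require Import all_boot all_order all_algebra.
From mathcomp Require Import all_classical all_reals all_analysis.
From mathcomp Require Import ring.
Set Implicit Arguments. Unset Strict Implicit.
Import Order.TTheory GRing.Theory Num.Theory.
Local Open Scope ring_scope.

(* Since beta log (pi*/pi_ref)(s, a) = Q*(s, a) - V*(s) = r(s, a) + V*(s ++ [a]) - V*(s),
   the implicit reward of the first k+1 tokens telescopes to
   log E_v - V*(x).  The common term V*(x) cancels in R_w(k) - R_l(k), and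
   E_w / (E_w + E_l) = sigma(log E_w - log E_l). *)

Section Trajectories.
Variables (R : realType) (A : finType).
Implicit Types (f g r : seq A -> A -> R) (V : seq A -> R) (s ys : seq A).

Lemma eq_traj_sum f g : f =2 g -> forall s ys, traj_sum f s ys = traj_sum g s ys.
Proof. by move=> fg s ys; elim: ys s => [|a ys IH] s //=; rewrite fg IH. Qed.

Lemma traj_sum_shaping r V s ys :
  traj_sum (fun s a => r s a + V (rcons s a) - V s) s ys
  = traj_sum r s ys + V (s ++ ys) - V s.
Proof.
elim: ys s => [|a ys IH] s /=; first by rewrite cats0 add0r subrr.
by rewrite IH cat_rcons; ring.
Qed.

Lemma log_ratio_pistar (beta : R) (pi_ref Q : seq A -> A -> R) V s a :
  beta != 0 -> 0 < pi_ref s a ->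
  beta * ln (pistar beta pi_ref Q V s a / pi_ref s a) = Q s a - V s.
Proof.
move=> beta_neq0 pi_gt0.
by rewrite /pistar [pi_ref s a * _]mulrC mulfK ?gt_eqF // expRK mulrC divfK.
Qed.

End Trajectories.

Lemma expR_div_sum (R : realType) (a b : R) :
  expR a / (expR a + expR b) = sigmoid (a - b).
Proof.
have ea_gt0 := expR_gt0 a; have eb_gt0 := expR_gt0 b.
rewrite /sigmoid opprB expRD expRN.
by field; rewrite !gt_eqF ?addr_gt0.
Qed.

Theorem theorem1 (R : realType) (A : finType) (beta : R) (hbeta : 0 < beta)
  (pi_ref : seq A -> A -> R)
  (hpos : forall s a, 0 < pi_ref s a)
  (hsum : forall s, \sum_(a : A) pi_ref s a = 1)
  (r : seq A -> A -> R) (terminal : pred (seq A))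
  (Q : seq A -> A -> R) (V : seq A -> R)
  (hQ : forall s a, Q s a = r s a + V (rcons s a))
  (hV : forall s, ~~ terminal s ->
          V s = beta * ln (\sum_(a : A) pi_ref s a * expR (Q s a / beta)))
  (hVterm : forall s, terminal s -> V s = 0)
  (x yw yl : seq A) (k : nat)
  (hkw : (k < size yw)%N) (hkl : (k < size yl)%N) :
  pk_BT r V x yw yl k =
  sigmoid (implicit_reward beta pi_ref Q V x yw k
           - implicit_reward beta pi_ref Q V x yl k).
Proof.
have log_ratio s a :
    beta * ln (pistar beta pi_ref Q V s a / pi_ref s a)
    = r s a + V (rcons s a) - V s.
  by rewrite log_ratio_pistar ?gt_eqF ?hQ.
rewrite /pk_BT /Esub /implicit_reward.
rewrite !(eq_traj_sum log_ratio x) !(traj_sum_shaping r V x).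
by rewrite expR_div_sum [in RHS]opprB addrA subrK.
Qed.
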